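(* Consider a stationary memoryless uncertain channel with single-symbol map $N$ as described in the context, and let $0\le\delta_1<m_{\mathscr{Y}}(V_N)$. Let $\bar X$ be a one-step transmitted UV with $[\![\bar X]\!]\subseteq\mathscr{X}$, $\bar Y$ its received UV, and $\bar\delta\ge0$ such that $\bar X\in\mathscr{F}_{\bar\delta}(1)$, $\bar\delta\le\delta_1/m_{\mathscr{Y}}([\![\bar Y]\!])$ and $$I_{\bar\delta/|[\![\bar X]\!]|}(\bar Y;\bar X)=\sup\Big\{I_{\tilde\delta/|[\![X(1)]\!]|}(Y(1);X(1)) : \tilde\delta\ge0,\ X(1)\in\mathscr{F}_{\tilde\delta}(1),\ \tilde\delta\le\delta_1/m_{\mathscr{Y}}([\![Y(1)]\!])\Big\}.$$ Let $\hat\delta=\max_{S\in[\![\bar Y|\bar X]\!]^*_{\bar\delta/|[\![\bar X]\!]|}} m_{\mathscr{Y}}(S)/m_{\mathscr{Y}}([\![\bar Y]\!])$. If for all $n>1$ we have $\bar\delta(\hat\delta\,|[\![\bar X]\!]|)^{n-1}\le\delta_n<1$, then under the product uncertainty assumption $C_N(\{\delta_n\})_*=I_{\bar\delta/|[\![\bar X]\!]|}(\bar Y;\bar X)$.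
   Context: Uncertain variables (UVs): a UV is a map $U$ from a sample space $\Omega$ to a set; jointly considered UVs share $\Omega$. $[\![U]\!]=\{U(\omega)\}$; $[\![U|w]\!]=\{U(\omega):W(\omega)=w\}$, $[\![U|W]\!]=\{[\![U|w]\!]:w\in[\![W]\!]\}$. An uncertainty function on a set $\mathscr{U}$ is a map $m$ on subsets of $\mathscr{U}$ with $m(\emptyset)=0$, $0<m(S)<\infty$ for nonempty $S$, $\max\{m(S_1),m(S_2)\}\le m(S_1\cup S_2)$. Association: $\mathscr{A}(X;Y)=\{m_{\mathscr{X}}([\![X|y_1]\!]\cap[\![X|y_2]\!])/m_{\mathscr{X}}([\![X]\!]):y_1\ne y_2\in[\![Y]\!]\}\setminus\{0\}$, $\mathscr{A}(Y;X)=\{m_{\mathscr{Y}}([\![Y|x_1]\!]\cap[\![Y|x_2]\!])/m_{\mathscr{Y}}([\![Y]\!]):x_1\ne x_2\in[\![X]\!]\}\setminus\{0\}$; $\mathscr{A}\succ\delta$: all elements $>\delta$ (false for $\emptyset$); $\mathscr{A}\preceq\delta$: all elements $\le\delta$ (true for $\emptyset$); $(X,Y)\stackrel{d}{\leftrightarrow}(\delta_1,\delta_2)$ iff $\mathscr{A}(X;Y)\succ\delta_1,\mathscr{A}(Y;X)\succ\delta_2$; $(X,Y)\stackrel{a}{\leftrightarrow}(\delta_1,\delta_2)$ iff $\mathscr{A}(X;Y)\preceq\delta_1,\mathscr{A}(Y;X)\preceq\delta_2$. $\delta$-mutual information: for UVs $U$ (with uncertainty function $m_{\mathscr{U}}$)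 and $W$, $u,u'\in[\![U]\!]$ are $\delta$-connected via $[\![U|W]\!]$ if there are $w_1,\dots,w_N\in[\![W]\!]$ with $u\in[\![U|w_1]\!]$, $u'\in[\![U|w_N]\!]$, $m_{\mathscr{U}}([\![U|w_i]\!]\cap[\![U|w_{i-1}]\!])/m_{\mathscr{U}}([\![U]\!])>\delta$ for $1<i\le N$; a set is $\delta$-connected if all pairs of its points are. A $\delta$-overlap family $[\![U|W]\!]^*_\delta$ is a family of distinct subsets covering $[\![U]\!]$, of largest cardinality among covering families with (i) each member $\delta$-connected and containing some $[\![U|w]\!]$; (ii) distinct members $S_1,S_2$ satisfy $m_{\mathscr{U}}(S_1\cap S_2)\le\delta\,m_{\mathscr{U}}([\![U]\!])$; (iii) each $[\![U|w]\!]$ contained in some member. $I_\delta(U;W)=\log_2|[\![U|W]\!]^*_\delta|$ if such a family exists, else $0$. Stationary memoryless channel: $\mathscr{X}$ is a totally bounded normed metric space, $\mathscr{Y}$ an output set, $N:\mathscr{X}\to2^{\mathscr{Y}}$; for $x(1:n)\in\mathscr{X}^n$, $S_N(x(1:n))=N(x(1))\times\cdots\times N(x(n))$. $m_{\mathscr{Y}}$ (resp. $m_{\mathscr{X}}$) is an uncertainty function on each $\mathscr{Y}^n$ (resp. $\mathscr{X}^n$), with $m_{\mathscr{Y}}(\mathscr{Y}^n)=1$. $V_N=N(x^* )$ with $x^*$ minimizing $m_{\mathscr{Y}}(N(x))$. A discrete $\mathcal{C}_n\subseteq\mathscr{X}^n$ is $(N,\delta_n)$-distinguishable if $m_{\mathscr{Y}}(S_N(x_1(1:n))\cap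 S_N(x_2(1:n)))/m_{\mathscr{Y}}(\mathscr{Y}^n)\le\delta_n/|\mathcal{C}_n|$ for all distinct codewords; $R_{\delta_n}=\sup\frac1n\log_2|\mathcal{C}_n|$ over such codebooks; $C_N(\{\delta_n\})_*=\inf_{n\ge1}R_{\delta_n}$. For a codebook $\mathcal{C}_n$, transmitted UV $X(1:n)$ and received UV $Y(1:n)$ satisfy $[\![X(1:n)]\!]=\mathcal{C}_n$, $[\![Y(1:n)]\!]=\bigcup_{x(1:n)\in\mathcal{C}_n}S_N(x(1:n))$, $[\![Y(1:n)|x(1:n)]\!]=\{y\in[\![Y(1:n)]\!]:y\in S_N(x(1:n))\}$, $[\![X(1:n)|y(1:n)]\!]=\{x\in[\![X(1:n)]\!]:y(1:n)\in S_N(x)\}$. $\mathscr{F}_\delta(n)$ is the set of transmitted UVs $X(1:n)$ with $[\![X(1:n)]\!]\subseteq\mathscr{X}^n$ such that $(X(1:n),Y(1:n))\stackrel{d}{\leftrightarrow}(0,\delta/|[\![X(1:n)]\!]|)$ or $(X(1:n),Y(1:n))\stackrel{a}{\leftrightarrow}(1,\delta/|[\![X(1:n)]\!]|)$. Product uncertainty assumption: $m_{\mathscr{Y}}(S_1\times\cdots\times S_n)=\prod_i m_{\mathscr{Y}}(S_i)$ for all $n$ and $S_i\subseteq\mathscr{Y}$. *)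

From mathcomp Require Import all_boot all_order all_algebra.
From mathcomp Require Import all_classical all_reals all_analysis.
Import Order.TTheory GRing.Theory Num.Theory.

Unset Implicit Arguments.
Unset Strict Implicit.
Unset Printing Implicit Defensive.

Local Open Scope classical_set_scope.
Local Open Scope ring_scope.

Definition log2 {R : realType} (x : R) : R := ln x / ln 2.

(* cardinality of a finite set (0 if infinite) *)
Definition scard {T} (A : set T) : nat :=
  match pselect (exists k, card_eq A `I_k) with
  | left e => projT1 (cid e)
  | right _ => 0%N
  end.

Definition uncertainty_function {R : realType} {T} (m : set T -> R) : Prop :=
  m set0 = 0 /\ (forall S, S !=set0 -> 0 < m S) /\
  (forall S1 S2, Num.max (m S1) (m S2) <= m (S1 `|` S2)).

Definition totally_bounded_space {R : realType} (X : pseudoMetricType R) : Prop :=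
  forall e : R, 0 < e -> exists A : set X, finite_set A /\
    forall x : X, exists a, A a /\ ball a e x.

(* m  : uncertainty function on the U-space; Ur = [[U]];              *)
(* Wr = [[W]]; cond w = [[U|w]].                                      *)
Section Overlap.
Context {R : realType} {T W : Type} (m : set T -> R) (Ur : set T)
  (Wr : set W) (cond : W -> set T) (d : R).

Definition dconnected_pt (u u' : T) : Prop :=
  exists (w0 : W) (s : seq W),
    Wr w0 /\ all (fun w => `[< Wr w >]) s /\ cond w0 u /\ cond (last w0 s) u' /\
    path (fun a b => `[< m (cond b `&` cond a) / m Ur > d >]) w0 s.

Definition dconnected_set (S : set T) : Prop :=
  forall u u', S u -> S u' -> dconnected_pt u u'.

Definition overlap_candidate (F : set (set T)) : Prop :=
  \bigcup_(S in F) S = Ur /\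
  (forall S, F S -> dconnected_set S /\ exists w, Wr w /\ cond w `<=` S) /\
  (forall S1 S2, F S1 -> F S2 -> S1 <> S2 -> m (S1 `&` S2) <= d * m Ur) /\
  (forall w, Wr w -> exists S, F S /\ cond w `<=` S).

Definition overlap_family (F : set (set T)) : Prop :=
  overlap_candidate F /\ finite_set F /\
  forall F', overlap_candidate F' -> finite_set F' /\ (scard F' <= scard F)%N.

Definition Idelta : R :=
  match pselect (exists F, overlap_family F) with
  | left e => log2 (scard (projT1 (cid e)))%:R
  | right _ => 0
  end.
End Overlap.

Section Channel.
Context {R : realType} {X Y : Type} (N : X -> set Y).

Definition SN {n} (x : 'I_n -> X) : set ('I_n -> Y) :=
  [set y | forall i, N (x i) (y i)].

(* codebook C = [[X(1:n)]] ; received range [[Y(1:n)]] *)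
Definition Yrange {n} (C : set ('I_n -> X)) : set ('I_n -> Y) :=
  \bigcup_(x in C) SN x.
Definition Ycond {n} (C : set ('I_n -> X)) (x : 'I_n -> X) : set ('I_n -> Y) :=
  Yrange C `&` SN x.
Definition Xcond {n} (C : set ('I_n -> X)) (y : 'I_n -> Y) : set ('I_n -> X) :=
  [set x | C x /\ SN x y].

Definition lift1 (S : set Y) : set ('I_1 -> Y) := [set y | S (y ord0)].

Context (mX : forall n, set ('I_n -> X) -> R) (mY : forall n, set ('I_n -> Y) -> R).

Definition assocXY {n} (C : set ('I_n -> X)) : set R :=
  [set r | exists y1 y2, Yrange C y1 /\ Yrange C y2 /\ y1 <> y2 /\
     r = mX n (Xcond C y1 `&` Xcond C y2) / mX n C] `\` [set 0].
Definition assocYX {n} (C : set ('I_n -> X)) : set R :=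
  [set r | exists x1 x2, C x1 /\ C x2 /\ x1 <> x2 /\
     r = mY n (Ycond C x1 `&` Ycond C x2) / mY n (Yrange C)] `\` [set 0].

Definition assoc_succ (A : set R) (d : R) : Prop := A !=set0 /\ forall r, A r -> d < r.
Definition assoc_preceq (A : set R) (d : R) : Prop := forall r, A r -> r <= d.

Definition dissociated {n} (C : set ('I_n -> X)) (d1 d2 : R) : Prop :=
  assoc_succ (assocXY C) d1 /\ assoc_succ (assocYX C) d2.
Definition associated {n} (C : set ('I_n -> X)) (d1 d2 : R) : Prop :=
  assoc_preceq (assocXY C) d1 /\ assoc_preceq (assocYX C) d2.

(* X(1:n) in F_delta(n), the UV being represented by its (finite, nonempty) range C *)
Definition Fdelta (n : nat) (d : R) (C : set ('I_n -> X)) : Prop :=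
  finite_set C /\ C !=set0 /\
  (dissociated C 0 (d / (scard C)%:R) \/ associated C 1 (d / (scard C)%:R)).

Definition IYX {n} (C : set ('I_n -> X)) (d : R) : R :=
  Idelta (mY n) (Yrange C) C (Ycond C) (d / (scard C)%:R).

Definition distinguishable (n : nat) (d : R) (C : set ('I_n -> X)) : Prop :=
  finite_set C /\ C !=set0 /\
  forall x1 x2, C x1 -> C x2 -> x1 <> x2 ->
    mY n (SN x1 `&` SN x2) / mY n setT <= d / (scard C)%:R.

Definition rate (n : nat) (d : R) : \bar R :=
  ereal_sup [set ((n%:R)^-1 * log2 (scard C)%:R)%:E | C in distinguishable n d].

Definition capacity (delta : nat -> R) : \bar R :=
  ereal_inf [set rate n (delta n) | n in [set n : nat | (0 < n)%N]].

Definition product_assumption : Prop :=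
  forall n (S : 'I_n -> set Y),
    mY n [set y | forall i, S i (y i)] = \prod_(i < n) mY 1 (lift1 (S i)).
End Channel.

(* Upper bound: a one-shot (N, delta_1)-distinguishable codebook C is associated
   for the threshold delta_1 / m([[Y]]), and since every [[Y|x]] is heavier than
   delta_1 while two of them overlap by at most delta_1 / |C|, the sets [[Y|x]]
   themselves form the largest overlap family.  So log2 |C| is one of the values
   whose supremum is I(Ybar; Xbar), and C_N <= R_{delta_1} <= I(Ybar; Xbar).

   Lower bound: each member of the overlap family of [[Ybar|Xbar]] contains
   some [[Ybar|x]]; take one such x per member and all k^n words over these k
   inputs.  Two distinct words differ in some letter, where the received sets
   overlap by at most dbar / |Xbar| * m([[Ybar]]); in every other letter they
   lie in a member of the family, of uncertainty at most dhat * m([[Ybar]]).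
   The product assumption multiplies these bounds, and the hypothesis on
   delta_n makes the code (N, delta_n)-distinguishable, so R_{delta_n} >= log2 k
   for every n. *)

From mathcomp Require Import all_boot all_order all_algebra.
From mathcomp Require Import all_classical all_reals all_analysis.
From mathcomp Require Import ring.
Import Order.TTheory GRing.Theory Num.Theory.
Local Open Scope classical_set_scope.
Local Open Scope ring_scope.

Lemma scardE {T} {A : set T} {n} : (A #= `I_n)%card -> scard A = n.
Proof.
move=> An; rewrite /scard; case: pselect => [e|[]]; last by exists n.
case: (cid e) => k /= Ak; apply/card_eq_II.
exact: card_eq_trans (card_esym Ak) An.
Qed.

Lemma scard_le {T U} {A : set T} {B : set U} :
  (A #<= B)%card -> finite_set B -> (scard A <= scard B)%N.
Proof.
move=> AB fB; have [k Ak] := card_le_finite AB fB; case: fB => m Bm.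
rewrite (scardE Ak) (scardE Bm) -card_le_II.
by rewrite -(card_le_eql Ak) -(card_le_eqr Bm).
Qed.

Lemma scard_gt0 {T} {A : set T} : finite_set A -> A !=set0 -> (0 < scard A)%N.
Proof.
move=> fA [a Aa]; rewrite -(scardE (@card_set1 _ a)).
by apply: scard_le fA; apply: subset_card_le => x ->.
Qed.

Lemma scard_image {T U} (A : set T) (g : T -> U) :
  {in A &, injective g} -> scard (g @` A) = scard A.
Proof.
move=> /inj_card_eq gA; rewrite /scard.
case: pselect => [[k Ak]|nA]; case: pselect => [[k' Ak']|nA'] //=.
- case: cid => j /= Aj; case: cid => j' /= Aj'; apply/card_eq_II.
  exact: card_eq_trans (card_esym Aj) (card_eq_trans gA Aj').
- by case: nA'; exists k; exact: card_eq_trans (card_esym gA) Ak.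
- by case: nA; exists k'; exact: card_eq_trans gA Ak'.
Qed.

Lemma scard_setT (T : finType) : scard [set: T] = #|T|.
Proof.
have rankT : enum_rank @` [set: T] = [set: 'I_#|T|].
  by apply/seteqP; split=> // i _; exists (enum_val i) => //; rewrite enum_valK.
rewrite -(scard_image _ enum_rank); last by move=> x y _ _ /enum_rank_inj.
by rewrite rankT; apply/scardE/card_esym/card_II.
Qed.

Section UncertaintyFunction.
Context {R : realType} {T : Type} {m : set T -> R}.
Hypothesis m_uf : uncertainty_function m.

Lemma le_uncertainty A B : A `<=` B -> m A <= m B.
Proof.
have [_ [_ m_max]] := m_uf; move=> AB.
by have := m_max A B; rewrite (setUidr AB) ge_max => /andP[].
Qed.

Lemma uncertainty_ge0 A : 0 <= m A.
Proof.
have [m0 [m_gt0 _]] := m_uf.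
by have [->|/set0P/m_gt0/ltW//] := eqVneq A set0; rewrite m0.
Qed.

End UncertaintyFunction.

Section OverlapFamily.
Context {R : realType} {T W : Type} {m : set T -> R} {Ur : set T}
  {Wr : set W} {cond : W -> set T} {d : R}.

Lemma Idelta_overlap_family F : overlap_family m Ur Wr cond d F ->
  Idelta m Ur Wr cond d = log2 (scard F)%:R.
Proof.
move=> famF; rewrite /Idelta; case: pselect => [e|nF]; last by case: nF; exists F.
have [cF [_ F_max]] := famF.
case: (cid e) => F' /= [cF' [_ F'_max]].
have [_ le1] := F_max _ cF'; have [_ le2] := F'_max _ cF.
by apply/congr1/congr1/eqP; rewrite eqn_leq le1 le2.
Qed.

Hypothesis m_uf : uncertainty_function m.
Hypothesis Wr_neq0 : Wr !=set0.
Hypothesis cond_big : forall w, Wr w -> d * m Ur < m (cond w).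

Lemma overlap_candidate_witness F : overlap_candidate m Ur Wr cond d F ->
  exists g : set T -> W,
    (forall S, F S -> Wr (g S) /\ cond (g S) `<=` S) /\ {in F &, injective g}.
Proof.
move=> [_ [F_cond [F_sep _]]]; have [w0 _] := Wr_neq0.
have /choice[g gF] : forall S, exists w, F S -> Wr w /\ cond w `<=` S.
  move=> S; have [/F_cond[_ [w wS]]|nFS] := pselect (F S); first by exists w.
  by exists w0.
exists g; split=> // S1 S2; rewrite !inE => FS1 FS2 gS12.
apply: contrapT => S12; have := F_sep _ _ FS1 FS2 S12; apply/negP; rewrite -ltNge.
have [Wg1 c1] := gF _ FS1; have [_ c2] := gF _ FS2.
apply: (lt_le_trans (cond_big _ Wg1)); apply: le_uncertainty m_uf _ _ _ => t ct.
by split; [exact: c1 | apply: c2; rewrite -gS12].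
Qed.

Lemma overlap_candidate_card_le F :
  overlap_candidate m Ur Wr cond d F -> (F #<= Wr)%card.
Proof.
move=> /overlap_candidate_witness[g [gF /inj_card_eq gFF]].
rewrite -(card_le_eql gFF); apply: subset_card_le.
by move=> _ [S FS <-]; have [] := gF _ FS.
Qed.

Lemma overlap_candidate_enum F :
  overlap_candidate m Ur Wr cond d F -> finite_set F ->
  exists (e : 'I_(scard F) -> set T) (rho : 'I_(scard F) -> W),
  [/\ forall i, F (e i), forall i, Wr (rho i) /\ cond (rho i) `<=` e i,
      forall i j, i != j -> m (e i `&` e j) <= d * m Ur & injective rho].
Proof.
move=> cF [k Fk]; have [g [gF g_inj]] := overlap_candidate_witness _ cF.
have [_ [_ [F_sep _]]] := cF.
rewrite (scardE Fk); move/card_esym/card_set_bijP: Fk => [e [eF e_inj _]].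
have Fe (i : 'I_k) : F (e i) by apply: eF; rewrite /= ltn_ord.
have e_inj' (i j : 'I_k) : e i = e j -> i = j.
  by move=> /e_inj eij; apply/val_inj/eij; rewrite inE /= ltn_ord.
exists (fun i => e i), (fun i => g (e i)); split => //.
- by move=> i; apply: gF.
- by move=> i j ij; apply: F_sep => // /e_inj' ije; rewrite ije eqxx in ij.
- by move=> i j /g_inj; rewrite !inE => /(_ (Fe i) (Fe j)) /e_inj'.
Qed.

Hypothesis Wr_fin : finite_set Wr.
Hypothesis cond_sep : forall w1 w2, Wr w1 -> Wr w2 -> w1 <> w2 ->
  m (cond w1 `&` cond w2) <= d * m Ur.
Hypothesis cond_sub : forall w, Wr w -> cond w `<=` Ur.
Hypothesis cond_cover : forall t, Ur t -> exists2 w, Wr w & cond w t.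

Lemma cond_inj : {in Wr &, injective cond}.
Proof.
move=> w1 w2; rewrite !inE => W1 W2 c12; apply: contrapT => w12.
by have := cond_sep _ _ W1 W2 w12; rewrite c12 setIid leNgt -c12 cond_big.
Qed.

Lemma overlap_candidate_cond : overlap_candidate m Ur Wr cond d (cond @` Wr).
Proof.
split; [|split; [|split]].
- apply/seteqP; split; first by move=> t [_ [w Ww <-]]; apply: cond_sub.
  by move=> t /cond_cover[w Ww ct]; exists (cond w) => //; exists w.
- move=> _ [w Ww <-]; split; last by exists w; split.
  by move=> u u' cu cu'; exists w, [::].
- move=> _ _ [w1 W1 <-] [w2 W2 <-] c12.
  by apply: cond_sep => // w12; rewrite w12 in c12.
- by move=> w Ww; exists (cond w); split => //; exists w.
Qed.

Lemma Idelta_separated : Idelta m Ur Wr cond d = log2 (scard Wr)%:R.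
Proof.
rewrite -(scard_image _ _ cond_inj); apply: Idelta_overlap_family.
split; first exact: overlap_candidate_cond.
split; first exact: finite_image.
move=> F' /overlap_candidate_card_le F'W.
split; first exact: card_le_finite F'W Wr_fin.
by rewrite scard_image; [exact: scard_le F'W Wr_fin | exact: cond_inj].
Qed.

End OverlapFamily.

Lemma ler_prodD1 {R : numDomainType} n (u : 'I_n -> R) (i0 : 'I_n) (a b : R) :
  (forall i, 0 <= u i) -> u i0 <= a -> (forall i, i != i0 -> u i <= b) ->
  \prod_i u i <= a * b ^+ n.-1.
Proof.
move=> u_ge0 u_i0 u_le; rewrite (bigD1 i0) //=.
have -> : b ^+ n.-1 = \prod_(i | i != i0) b by rewrite prodr_const cardC1 card_ord.
apply: ler_pM => //; first exact: prodr_ge0.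
by apply: ler_prod => i i_neq0; rewrite u_ge0 u_le.
Qed.

(* The overlap bound [a * b ^+ n] of the product code, with [a = dbar / k' * U]
   and [b = dhat * U], scaled by the code size [k ^+ n.+1]. *)
Lemma product_overlap_bound {R : realFieldType} (dbar dhat U k k' : R) n :
  0 <= dbar -> 0 <= dhat -> 0 <= U <= 1 -> 0 < k <= k' ->
  dbar / k' * U * (dhat * U) ^+ n * k ^+ n.+1 <= dbar * U * (dhat * k') ^+ n.
Proof.
move=> dbar_ge0 dhat_ge0 /andP[U_ge0 U_le1] /andP[k_gt0 k_le].
have k'_gt0 : 0 < k' := lt_le_trans k_gt0 k_le.
have -> : dbar / k' * U * (dhat * U) ^+ n * k ^+ n.+1 =
          dbar * U * dhat ^+ n * (U ^+ n * k ^+ n.+1 / k').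
  by rewrite !exprMn; field; rewrite gt_eqF.
rewrite [in leRHS]exprMn [in leRHS]mulrA.
apply: ler_wpM2l; first by rewrite !mulr_ge0 ?exprn_ge0.
rewrite ler_pdivrMr // -exprSr -[leRHS]mul1r.
apply: ler_pM; [exact: exprn_ge0 | exact/exprn_ge0/ltW | exact: exprn_ile1 |].
by apply: lerXn2r; rewrite // nnegrE ltW.
Qed.

Section ProductCode.
Context {X : Type}.

Definition product_code n {k} (c : 'I_k -> X) : set ('I_n -> X) :=
  [set (fun i => c (f i)) | f in [set: {ffun 'I_n -> 'I_k}]].

Lemma scard_product_code n {k} (c : 'I_k -> X) :
  injective c -> scard (product_code n c) = (k ^ n)%N.
Proof.
move=> c_inj; rewrite /product_code scard_image ?scard_setT ?card_ffun.
  by rewrite !cardE !size_enum_ord.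
move=> f g _ _ fg; apply/ffunP => i; exact: c_inj (congr1 (fun x => x i) fg).
Qed.

End ProductCode.

Section Channel.
Context {R : realType} {X Y : Type} (N : X -> set Y)
  (mX : forall n, set ('I_n -> X) -> R) (mY : forall n, set ('I_n -> Y) -> R).
Hypothesis mX_uf : forall n, uncertainty_function (mX n).
Hypothesis mY_uf : forall n, uncertainty_function (mY n).
Hypothesis mY_setT : forall n, mY n setT = 1.

Lemma SN1 (x : 'I_1 -> X) : SN N x = lift1 (N (x ord0)).
Proof. by apply/seteqP; split=> y /= Ny => [|i]; rewrite ?(ord1 i); apply: Ny. Qed.

Lemma SN_setI n (x1 x2 : 'I_n -> X) :
  SN N x1 `&` SN N x2 = [set y | forall i, (N (x1 i) `&` N (x2 i)) (y i)].
Proof.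
apply/seteqP; split=> y /=.
  by move=> [N1 N2] i; split; [exact: N1 | exact: N2].
by move=> N12; split=> i; have [] := N12 i.
Qed.

Lemma Ycond_SN {n} {C : set ('I_n -> X)} {x} : C x -> Ycond N C x = SN N x.
Proof. by move=> Cx; apply/seteqP; split=> [y []//|y Ny]; split=> //; exists x. Qed.

Lemma product_code_overlap n k (c : 'I_k -> X) (e : 'I_k -> set ('I_1 -> Y)) a b :
  product_assumption mY ->
  (forall i, lift1 (N (c i)) `<=` e i) ->
  (forall i j, i != j -> mY 1 (e i `&` e j) <= a) ->
  (forall i, mY 1 (e i) <= b) ->
  forall x1 x2, product_code n c x1 -> product_code n c x2 -> x1 <> x2 ->
    mY n (SN N x1 `&` SN N x2) <= a * b ^+ n.-1.
Proof.
move=> prod ce e_sep e_le _ _ [f _ <-] [g _ <-] fg.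
have /existsNP[i0 fg_i0] : ~ forall i, c (f i) = c (g i).
  by move=> fg_all; apply: fg; apply: funext.
have lift1_setI i : lift1 (N (c (f i)) `&` N (c (g i))) `<=` e (f i) `&` e (g i).
  by move=> y [Nf Ng]; split; apply: ce.
rewrite SN_setI (prod n (fun i => N (c (f i)) `&` N (c (g i)))).
apply: (ler_prodD1 _ _ i0).
- by move=> i; apply: uncertainty_ge0.
- apply: le_trans (le_uncertainty (mY_uf 1) _ _ (lift1_setI i0)) (e_sep _ _ _).
  by apply: contra_notN fg_i0 => /eqP ->.
- move=> i _; apply: le_trans (e_le (f i)).
  by apply: le_uncertainty (mY_uf 1) _ _ _ => y /lift1_setI[].
Qed.

Lemma product_code_distinguishable n k (c : 'I_k -> X) e a b d :
  product_assumption mY -> (0 < k)%N -> injective c ->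
  (forall i, lift1 (N (c i)) `<=` e i) ->
  (forall i j, i != j -> mY 1 (e i `&` e j) <= a) ->
  (forall i, mY 1 (e i) <= b) ->
  a * b ^+ n.-1 * (k ^ n)%:R <= d ->
  distinguishable N mY n d (product_code n c).
Proof.
move=> prod k_gt0 c_inj ce e_sep e_le ab_d.
split; first exact: finite_image.
split; first by eexists; exists [ffun=> Ordinal k_gt0].
move=> x1 x2 Cx1 Cx2 x12; rewrite mY_setT divr1 scard_product_code //.
rewrite ler_pdivlMr ?ltr0n ?expn_gt0 ?k_gt0 //; apply: le_trans ab_d.
apply: ler_wpM2r => //; exact: product_code_overlap.
Qed.

Lemma rate_ge_log2 n k d (C : set ('I_n -> X)) :
  (0 < n)%N -> (0 < k)%N -> distinguishable N mY n d C -> scard C = (k ^ n)%N ->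
  ((log2 k%:R)%:E <= rate N mY n d)%E.
Proof.
move=> n_gt0 k_gt0 dC sC; apply: ereal_sup_ubound; exists C => //; congr (_%:E).
rewrite sC natrX /log2 lnXn ?ltr0n // -mulr_natr.
by field; rewrite pnatr_eq0 -lt0n n_gt0 gt_eqF // ln_gt0 // ltr1n.
Qed.

Variable dl : R.
Hypothesis dl_ge0 : 0 <= dl.
Hypothesis SN_big : forall x : 'I_1 -> X, dl < mY 1 (SN N x).

Lemma Yrange_gt0 {C : set ('I_1 -> X)} : C !=set0 -> 0 < mY 1 (Yrange N C).
Proof.
move=> [x Cx]; apply: le_lt_trans dl_ge0 (lt_le_trans (SN_big x) _).
by apply: le_uncertainty (mY_uf 1) _ _ _ => y Ny; exists x.
Qed.

Section Distinguishable.
Variable C : set ('I_1 -> X).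
Hypothesis C_dist : distinguishable N mY 1 dl C.

Let U := mY 1 (Yrange N C).

Lemma distinguishable_Ycond_sep x1 x2 : C x1 -> C x2 -> x1 <> x2 ->
  mY 1 (Ycond N C x1 `&` Ycond N C x2) <= dl / (scard C)%:R.
Proof.
have [_ [_ C_sep]] := C_dist; move=> Cx1 Cx2 x12.
rewrite (Ycond_SN Cx1) (Ycond_SN Cx2).
by have := C_sep _ _ Cx1 Cx2 x12; rewrite mY_setT divr1.
Qed.

Lemma distinguishable_Fdelta : Fdelta N mX mY 1 (dl / U) C.
Proof.
have [C_fin [[x0 Cx0] _]] := C_dist.
have U_gt0 : 0 < U by apply: Yrange_gt0; exists x0.
split=> //; split; first by exists x0.
have mC_gt0 : 0 < mX 1 C by have [_ [mX_gt0 _]] := mX_uf 1; apply: mX_gt0; exists x0.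
right; split.
- move=> r [[y1 [y2 [_ [_ [_ ->]]]]] _]; rewrite ler_pdivrMr // mul1r.
  by apply: le_uncertainty (mX_uf 1) _ _ _ => x [[]].
- move=> r [[x1 [x2 [Cx1 [Cx2 [x12 ->]]]]] _].
  rewrite mulrAC; apply: ler_wpM2r; first by rewrite invr_ge0 ltW.
  exact: distinguishable_Ycond_sep.
Qed.

Lemma distinguishable_IYX : IYX N mY C (dl / U) = log2 (scard C)%:R.
Proof.
have [C_fin [C_neq0 _]] := C_dist.
have U_gt0 : 0 < U := Yrange_gt0 C_neq0.
have C_gt0 : (0 < (scard C)%:R :> R) by rewrite ltr0n scard_gt0.
have dlU : dl / U / (scard C)%:R * U = dl / (scard C)%:R.
  by field; rewrite !gt_eqF.
apply: (Idelta_separated (mY_uf 1) C_neq0 _ C_fin).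
- move=> x Cx; rewrite dlU (Ycond_SN Cx); apply: le_lt_trans (SN_big x).
  rewrite ler_pdivrMr //; apply: ler_peMr => //; rewrite ler1n; exact: scard_gt0.
- by move=> x1 x2 Cx1 Cx2 x12; rewrite dlU; exact: distinguishable_Ycond_sep.
- by move=> x _ y [].
- by move=> y [x Cx Ny]; exists x => //; split => //; exists x.
Qed.

End Distinguishable.

Lemma rate1_le_sup : (rate N mY 1 dl <= ereal_sup [set r | exists (dt : R) C,
    (0 <= dt)%R /\ Fdelta N mX mY 1 dt C /\ (dt <= dl / mY 1 (Yrange N C))%R /\
    r = (IYX N mY C dt)%:E])%E.
Proof.
apply: ge_ereal_sup => _ [C C_dist <-]; apply: ereal_sup_ubound.
have [_ [C_neq0 _]] := C_dist.
exists (dl / mY 1 (Yrange N C)), C.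
split; first exact: divr_ge0 dl_ge0 (ltW (Yrange_gt0 C_neq0)).
split; first exact: distinguishable_Fdelta.
by split=> //; rewrite distinguishable_IYX // mulr1n invr1 mul1r.
Qed.

Lemma overlap_family_log2_le_rate (Cbar : set ('I_1 -> X)) dbar dhat F n d :
  product_assumption mY -> (0 < n)%N -> 0 <= dbar -> 0 <= dhat ->
  finite_set Cbar -> Cbar !=set0 -> dbar * mY 1 (Yrange N Cbar) <= dl ->
  overlap_family (mY 1) (Yrange N Cbar) Cbar (Ycond N Cbar)
    (dbar / (scard Cbar)%:R) F ->
  (forall S, F S -> mY 1 S / mY 1 (Yrange N Cbar) <= dhat) ->
  dbar * mY 1 (Yrange N Cbar) * (dhat * (scard Cbar)%:R) ^+ n.-1 <= d ->
  ((log2 (scard F)%:R)%:E <= rate N mY n d)%E.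
Proof.
move=> prod n_gt0 dbar_ge0 dhat_ge0 C_fin C_neq0 dbarU famF dhat_max budget.
set U := mY 1 (Yrange N Cbar); set k' := scard Cbar; set k := scard F.
have U_gt0 : 0 < U := Yrange_gt0 C_neq0.
have U_le1 : U <= 1 by rewrite -(mY_setT 1); apply: le_uncertainty (mY_uf 1) _ _ _.
have k'_gt0 : (0 < k')%N := scard_gt0 C_fin C_neq0.
have cond_big x : Cbar x -> dbar / k'%:R * U < mY 1 (Ycond N Cbar x).
  move=> Cx; rewrite (Ycond_SN Cx); apply: le_lt_trans (SN_big x).
  apply: le_trans dbarU; rewrite mulrAC ler_pdivrMr ?ltr0n //.
  by apply: ler_peMr; [exact: mulr_ge0 dbar_ge0 (ltW U_gt0) | rewrite ler1n].
have [cF [F_fin _]] := famF.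
have k_le : (k <= k')%N.
  exact: scard_le (overlap_candidate_card_le (mY_uf 1) C_neq0 cond_big _ cF) C_fin.
have k_gt0 : (0 < k)%N.
  have [x0 Cx0] := C_neq0; have [_ [_ [_ F_cover]]] := cF.
  by have [S [FS _]] := F_cover x0 Cx0; apply: scard_gt0 F_fin _; exists S.
have [e [rho [Fe rho_cond e_sep rho_inj]]] :=
  overlap_candidate_enum (mY_uf 1) C_neq0 cond_big _ cF F_fin.
pose c i := rho i ord0.
have c_inj : injective c.
  by move=> i j cij; apply: rho_inj; apply/funext => o; rewrite (ord1 o).
apply: (rate_ge_log2 _ _ _ (product_code n c)) => //; last exact: scard_product_code.
apply: (product_code_distinguishable _ _ c e (dbar / k'%:R * U) (dhat * U) _ prod
  k_gt0 c_inj).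
- by move=> i; have [Crho rho_e] := rho_cond i; rewrite -SN1 -(Ycond_SN Crho).
- exact: e_sep.
- by move=> i; rewrite -ler_pdivrMr //; apply: dhat_max.
- case: n n_gt0 budget => // n _ /=; apply: le_trans; rewrite natrX.
  apply: product_overlap_bound => //.
    by rewrite (ltW U_gt0) U_le1.
  by rewrite ltr0n ler_nat k_gt0 k_le.
Qed.

End Channel.

Theorem theorem13 (R : realType) (X : pseudoMetricType R) (Y : Type)
  (N : X -> set Y)
  (mX : forall n, set ('I_n -> X) -> R) (mY : forall n, set ('I_n -> Y) -> R)
  (delta : nat -> R) (xstar : X)
  (Cbar : set ('I_1 -> X)) (dbar dhat : R) (F : set (set ('I_1 -> Y))) :
  totally_bounded_space X ->
  (forall n, uncertainty_function (mX n)) ->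
  (forall n, uncertainty_function (mY n)) ->
  (forall n, mY n setT = 1) ->
  (* V_N = N(xstar), xstar minimizing m_Y(N(x)) *)
  (forall x, mY 1 (lift1 (N xstar)) <= mY 1 (lift1 (N x))) ->
  0 <= delta 1%N -> delta 1%N < mY 1 (lift1 (N xstar)) ->
  product_assumption mY ->
  0 <= dbar ->
  Fdelta N mX mY 1 dbar Cbar ->
  dbar <= delta 1%N / mY 1 (Yrange N Cbar) ->
  (IYX N mY Cbar dbar)%:E =
    ereal_sup [set r | exists (dt : R) (C : set ('I_1 -> X)),
      0 <= dt /\ Fdelta N mX mY 1 dt C /\ dt <= delta 1%N / mY 1 (Yrange N C) /\
      r = (IYX N mY C dt)%:E] ->
  overlap_family (mY 1) (Yrange N Cbar) Cbar (Ycond N Cbar)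
    (dbar / (scard Cbar)%:R) F ->
  (exists S, F S /\ dhat = mY 1 S / mY 1 (Yrange N Cbar)) ->
  (forall S, F S -> mY 1 S / mY 1 (Yrange N Cbar) <= dhat) ->
  (forall n, (1 < n)%N ->
     dbar * (dhat * (scard Cbar)%:R) ^+ n.-1 <= delta n /\ delta n < 1) ->
  capacity N mY delta = (IYX N mY Cbar dbar)%:E.
Proof.
move=> _ mX_uf mY_uf mY_setT xstar_min d1_ge0 d1_lt prod dbar_ge0 FCbar dbar_le
  Isup famF [S0 [_ dhatE]] dhat_max delta_n.
have SN_big (x : 'I_1 -> X) : delta 1%N < mY 1 (SN N x).
  by rewrite SN1; exact: lt_le_trans d1_lt (xstar_min _).
have [C_fin [C_neq0 _]] := FCbar.
have U_gt0 := Yrange_gt0 N mY mY_uf _ d1_ge0 SN_big C_neq0.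
have dhat_ge0 : 0 <= dhat by rewrite dhatE divr_ge0 ?uncertainty_ge0 ?ltW.
apply/eqP; rewrite eq_le; apply/andP; split.
  apply: (@le_trans _ _ (rate N mY 1 (delta 1%N))).
    by apply: ereal_inf_lbound; exists 1%N.
  by rewrite Isup; exact: rate1_le_sup.
rewrite /IYX (Idelta_overlap_family _ famF); apply/ereal_infP => _ [n n_gt0 <-].
apply: (overlap_family_log2_le_rate N mY mY_uf mY_setT _ d1_ge0 SN_big Cbar dbar dhat
  F n _ prod n_gt0 dbar_ge0 dhat_ge0 C_fin C_neq0 _ famF dhat_max).
  by rewrite -ler_pdivlMr.
case: n n_gt0 => [//|[|n]] _ /=; first by rewrite expr0 mulr1 -ler_pdivlMr.
apply: le_trans (delta_n n.+2 _).1 => //; rewrite mulrAC ler_piMr //.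
  by rewrite mulr_ge0 ?exprn_ge0 ?mulr_ge0.
by rewrite -(mY_setT 1); apply: le_uncertainty (mY_uf 1) _ _ _.
Qed.
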